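(* Let $G=(V,E)$ be a $2$-edge-strongly biconnected directed graph with $n=|V|$, run Algorithm A (described in the context) on $G$, let $H=(V,U)$ be the minimal $2$-edge-connected spanning subgraph chosen in its step (1), and let $i$ be the number of b-bridges in $H$. Then the edge set $E_{2e}$ of the output of Algorithm A satisfies $|E_{2e}|\leq i(n-1)+5n$.
   Context: A directed graph is strongly biconnected if it is strongly connected and its underlying undirected graph (ignoring edge directions) is biconnected. A strongly biconnected component of a directed graph is a maximal strongly biconnected subgraph. A strongly biconnected directed graph $G=(V,E)$ is $2$-edge-strongly biconnected if it has at least three vertices and $(V,E\setminus\{e\})$ is strongly biconnected for every $e\in E$. For a directed graph $D=(V,F)$, an edge $e\in F$ is a b-bridge if $(V,F\setminus\{e\})$ is not strongly biconnected. A directed graph is $2$-edge-connected if it is strongly connected and remains strongly connected after deleting any single edge. Algorithm A, on input a $2$-edge-strongly biconnected directed graph $G=(V,E)$: (1) Choose $U\subseteq E$ such that $H=(V,U)$ is a minimal $2$-edge-connected spanning subgraph of $G$ (i.e. $H$ is $2$-edge-connected and deleting any edge of $U$ destroys $2$-edge-connectivity). (2) If $H$ is $2$-edge-strongly biconnected, output $H$ (so the output edge set is $E_{2e}=U$) and stop. (3) Otherwise set $E_{2e}:=U$. While the underlying undirected graph of $(V,E_{2e})$ is not biconnected: compute the strongly biconnected components of $(V,E_{2e})$, find an edge $(v,w)\in E\setminus E_{2e}$ such that $v,w$ are not in the same strongly biconnected component of $(V,E_{2e})$, and add $(v,w)$ to $E_{2e}$. (4) Compute the set of b-bridges of $(V,E_{2e})$.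 For each such b-bridge $t$: while the underlying undirected graph of $(V,E_{2e}\setminus\{t\})$ is not biconnected, compute the strongly biconnected components of $(V,E_{2e}\setminus\{t\})$, find an edge $(u,w)\in E\setminus E_{2e}$ such that $u,w$ are not in the same strongly biconnected component of $(V,E_{2e}\setminus\{t\})$, and add $(u,w)$ to $E_{2e}$. (5) Output $(V,E_{2e})$. *)

(* Directed graphs on a finite vertex type T (V = [set: T]);
   an edge set is a {set T * T}, the edge (x,y) being directed from x to y. *)
From mathcomp Require Import all_boot.
Set Implicit Arguments. Unset Strict Implicit. Unset Printing Implicit Defensive.

Section Digraphs.
Variable T : finType.
Notation edge := (T * T)%type.

Definition srel (S : {set T}) (F : {set edge}) : rel T :=
  fun x y => [&& x \in S, y \in S & (x, y) \in F].
Definition urel (S : {set T}) (F : {set edge}) : rel T :=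
  fun x y => [&& x \in S, y \in S & ((x, y) \in F) || ((y, x) \in F)].

Definition sconn (S : {set T}) (F : {set edge}) : bool :=
  [forall x in S, forall y in S, connect (srel S F) x y].
Definition uconn (S : {set T}) (F : {set edge}) : bool :=
  [forall x in S, forall y in S, connect (urel S F) x y].
Definition biconn (S : {set T}) (F : {set edge}) : bool :=
  uconn S F && [forall v in S, uconn (S :\ v) F].
Definition sbiconn (S : {set T}) (F : {set edge}) : bool :=
  sconn S F && biconn S F.

Definition strongly_biconnected (F : {set edge}) := sbiconn [set: T] F.
Definition two_edge_sb (F : {set edge}) : bool :=
  [&& 3 <= #|T|, strongly_biconnected F &
      [forall e in F, strongly_biconnected (F :\ e)]].
Definition two_edge_connected (F : {set edge}) : bool :=
  sconn [set: T] F && [forall e in F, sconn [set: T] (F :\ e)].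
Definition min_2ec_spanning (E U : {set edge}) : Prop :=
  [/\ U \subset E, two_edge_connected U &
      forall e, e \in U -> ~~ two_edge_connected (U :\ e)].
Definition bbridges (F : {set edge}) : {set edge} :=
  [set e in F | ~~ strongly_biconnected (F :\ e)].

Definition subgraph (F : {set edge}) (S : {set T}) (F' : {set edge}) : Prop :=
  F' \subset F /\ forall x y, (x, y) \in F' -> x \in S /\ y \in S.
Definition is_sbc (F : {set edge}) (S : {set T}) (F' : {set edge}) : Prop :=
  [/\ subgraph F S F', sbiconn S F' &
      forall S2 F2, subgraph F S2 F2 -> sbiconn S2 F2 ->
        S \subset S2 -> F' \subset F2 -> S = S2 /\ F' = F2].
Definition same_sbc (F : {set edge}) (v w : T) : Prop :=
  exists S F', [/\ is_sbc F S F', v \in S & w \in S].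

(* The augmentation while-loop, with current edge set Cur (= E_2e):
   while the underlying graph of (V, Cur \ R) is not biconnected, add an edge
   (v,w) in E \ Cur with v, w not in the same SBC of (V, Cur \ R).
   Step (3) uses R = set0, step (4) uses R = [set t].
   aug_loop E R Cur Out : Out is a possible final value. *)
Inductive aug_loop (E R : {set edge}) : {set edge} -> {set edge} -> Prop :=
| aug_stop Cur : biconn [set: T] (Cur :\: R) -> aug_loop E R Cur Cur
| aug_step Cur v w Out :
    ~~ biconn [set: T] (Cur :\: R) ->
    (v, w) \in E -> (v, w) \notin Cur ->
    ~ same_sbc (Cur :\: R) v w ->
    aug_loop E R ((v, w) |: Cur) Out -> aug_loop E R Cur Out.

(* step (4): process the b-bridges in the order given by the list *)
Inductive bridge_loop (E : {set edge}) : seq edge -> {set edge} -> {set edge} -> Prop :=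
| bl_nil Cur : bridge_loop E [::] Cur Cur
| bl_cons t ts Cur Mid Out :
    aug_loop E [set t] Cur Mid -> bridge_loop E ts Mid Out ->
    bridge_loop E (t :: ts) Cur Out.

(* Out is a possible output of Algorithm A on G = (V, E) when the minimal
   2-edge-connected spanning subgraph chosen in step (1) is (V, U). *)
Definition algA_run (E U Out : {set edge}) : Prop :=
  min_2ec_spanning E U /\
  ((two_edge_sb U /\ Out = U) \/
   (~~ two_edge_sb U /\
    exists F3 s, [/\ aug_loop E set0 U F3,
                     perm_eq s (enum (bbridges F3)) &
                     bridge_loop E s F3 Out])).
End Digraphs.

(** The bound [#|U| <= 4 (n - 1)] for a minimal 2-edge-connected spanning
    subgraph comes from Edmonds' branching theorem: rooted at any vertex, there
    are two arc-disjoint spanning out-arborescences and (in the reversed graph)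
    two arc-disjoint spanning in-arborescences, and their union is already
    2-edge-connected, hence equal to [U] by minimality.

    If the underlying graph of [U] is not biconnected, every arc of [U] is a
    b-bridge, so [i = #|U| >= n] and the trivial bound [n ^ 2] suffices.
    Otherwise step (3) adds nothing, and while a b-bridge [t] is processed
    every added arc joins two vertices that some third vertex [x] separates in
    the underlying graph of [E_2e - t] (otherwise they would lie in a common
    strongly biconnected component).  Fix a spanning out-arborescence [B] of
    [U - t] with root [r] and call the children of [x] in [B], together with
    [r], the anchors of [x].  The number of pairs ([x], component of
    [E_2e - t - x] containing an anchor of [x]) lies between [n] and
    [#|B| + n - 1 <= 2 n - 2] and drops with every added arc, so each b-bridge
    costs at most [n - 2] arcs: [#|E_2e| <= 4 (n - 1) + i (n - 2)]. *)

From mathcomp Require Import all_boot zify.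
Set Implicit Arguments. Unset Strict Implicit. Unset Printing Implicit Defensive.

Section Connectivity.
Variable T : finType.
Notation edge := (T * T)%type.
Implicit Types (S : {set T}) (F : {set edge}).

Lemma setC_neq0 S : S != setT -> ~: S != set0.
Proof. by rewrite -setCT (inj_eq (@setC_inj _)). Qed.

Lemma exists_neq (v : T) : 1 < #|T| -> exists u, u != v.
Proof.
move=> n2; have /card_gt0P[u] : 0 < #|[set~ v]| by rewrite cardsC1 -ltnS prednK // ltnW.
by rewrite !inE => uv; exists u.
Qed.

Lemma srelT F x y : srel setT F x y = ((x, y) \in F).
Proof. by rewrite /srel !inE. Qed.

Lemma connect_enter (e : rel T) (X : {set T}) x y :
  connect e x y -> x \notin X -> y \in X -> exists a b, [/\ e a b, a \notin X & b \in X].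
Proof.
move=> /connectP[p]; elim: p x => [|z p IHp] x /=; first by move=> _ -> /negP.
move=> /andP[exz pz] ey xX yX; have [zX|zX] := boolP (z \in X); first by exists x, z.
exact: IHp pz ey zX yX.
Qed.

Lemma connect_srel_sub S F F' x y :
  F \subset F' -> connect (srel S F) x y -> connect (srel S F') x y.
Proof.
move=> sFF'; apply: connect_sub => a b /and3P[aS bS abF]; apply: connect1.
by rewrite /srel aS bS (subsetP sFF' _ abF).
Qed.

Lemma connect_urel_sub S S' F F' x y :
  S \subset S' -> F \subset F' -> connect (urel S F) x y -> connect (urel S' F') x y.
Proof.
move=> sS sF; apply: connect_sub => a b /and3P[aS bS abF]; apply: connect1.
rewrite /urel (subsetP sS _ aS) (subsetP sS _ bS) /=.
by case/orP: abF => h; rewrite (subsetP sF _ h) ?orbT.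
Qed.

Lemma urel_connect_sym S F : connect_sym (urel S F).
Proof.
apply: sym_connect_sym => a b; rewrite /urel.
by apply/idP/idP => /and3P[-> -> /=]; rewrite orbC.
Qed.

Lemma connect_srel_urel S F x y : connect (srel S F) x y -> connect (urel S F) x y.
Proof.
apply: connect_sub => a b /and3P[aS bS abF]; apply: connect1.
by rewrite /urel aS bS abF.
Qed.

Lemma sconnP S F x y : sconn S F -> x \in S -> y \in S -> connect (srel S F) x y.
Proof. by move=> /forall_inP/(_ x) H xS yS; move: (H xS) => /forall_inP/(_ y yS). Qed.

Lemma sconn_sub S F F' : F \subset F' -> sconn S F -> sconn S F'.
Proof.
move=> sF sc; apply/forall_inP => x xS; apply/forall_inP => y yS.
exact: connect_srel_sub sF (sconnP sc xS yS).
Qed.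

Lemma uconn_sconn S F : sconn S F -> uconn S F.
Proof.
move=> sc; apply/forall_inP => x xS; apply/forall_inP => y yS.
exact: connect_srel_urel (sconnP sc xS yS).
Qed.

Lemma biconn_sub S F F' : F \subset F' -> biconn S F -> biconn S F'.
Proof.
move=> sF; have uconn_sub (S1 : {set T}) : uconn S1 F -> uconn S1 F'.
  move=> uc; apply/forall_inP => x xS; apply/forall_inP => y yS.
  by move: uc => /forall_inP/(_ x xS)/forall_inP/(_ y yS); apply: connect_urel_sub.
move=> /andP[uc /forall_inP ucD]; rewrite /biconn uconn_sub //=.
by apply/forall_inP => v vS; apply: uconn_sub; apply: ucD.
Qed.

Definition reach F r := forall x, connect (srel setT F) r x.

Lemma reach_enter F r (X : {set T}) x :
  reach F r -> r \notin X -> x \in X -> exists a b, [/\ (a, b) \in F, a \notin X & b \in X].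
Proof.
move=> rF rX xX; have [a [b []]] := connect_enter (rF x) rX xX.
by rewrite srelT; exists a, b.
Qed.

Lemma sconnT_reach F r : sconn setT F -> reach F r.
Proof. by move=> sc x; apply: sconnP. Qed.

Lemma sconnT_root F r :
  reach F r -> (forall x, connect (srel setT F) x r) -> sconn setT F.
Proof.
move=> out in_; apply/forall_inP => x _; apply/forall_inP => y _.
exact: connect_trans (in_ x) (out y).
Qed.

Lemma card_sconn_ge F : sconn setT F -> 1 < #|T| -> #|T| <= #|F|.
Proof.
move=> sF n2; rewrite -cardsT -[setT](_ : [set e.1 | e in F] = _) ?leq_imset_card //.
apply/setP => x; rewrite inE; apply/imsetP.
have [y yx] := exists_neq x n2; rewrite -in_set1 -in_setC in yx.
have xx : x \notin ~: [set x] by rewrite !inE eqxx.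
have [a [b [ab ax _]]] := connect_enter (sconnP sF (in_setT x) (in_setT y)) xx yx.
by move: ax; rewrite !inE negbK => /eqP ax; exists (a, b); rewrite -?srelT.
Qed.

Lemma bbridges_not_biconn F : ~~ biconn setT F -> bbridges F = F.
Proof.
move=> nbF; apply/setP => e; rewrite inE andb_idr // => _.
by apply: contra nbF => /andP[_]; apply: biconn_sub; apply: subsetDl.
Qed.

End Connectivity.

Section Arborescence.
Variable T : finType.
Notation edge := (T * T)%type.
Implicit Types (S : {set T}) (B F : {set edge}).

Lemma grow_arborescence r (P : {set edge} -> {set T} -> Prop) :
  P set0 [set r] ->
  (forall B S, P B S -> r \in S -> {in B, forall e, e.2 \in S} -> S != setT ->
     exists a b, [/\ a \in S, b \notin S & P ((a, b) |: B) (b |: S)]) ->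
  exists B, [/\ P B setT, #|B| < #|T| & reach B r].
Proof.
move=> P0 grow.
pose inv B S := [/\ P B S, r \in S, {in B, forall e, (e.1 \in S) && (e.2 \in S)},
  #|B| < #|S| & {in S, forall x, connect (srel setT B) r x}].
suff: forall k B S, #|~: S| = k -> inv B S -> exists B, [/\ P B setT, #|B| < #|T| & reach B r].
  move=> /(_ _ set0 [set r] erefl); apply; split; rewrite ?set11 ?cards0 ?cards1 //.
  - by move=> e; rewrite in_set0.
  - by move=> x /set1P ->.
elim=> [|k IHk] B S cardC [PBS rS BS ltBS reachS].
  have ST : S = setT by apply/eqP/negPn/negP => /setC_neq0; rewrite -card_gt0 cardC.
  by exists B; split; rewrite -?cardsT -?ST // => x; apply: reachS; rewrite ST inE.
have SnT : S != setT by apply: contra_eqN cardC => /eqP ->; rewrite setCT cards0.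
have [a [b [aS bS PB'S']]] := grow B S PBS rS (fun e eB => proj2 (andP (BS e eB))) SnT.
have BB' : B \subset (a, b) |: B by apply: subsetUr.
apply: (IHk ((a, b) |: B) (b |: S)); last split => //.
- have -> : ~: (b |: S) = (~: S) :\ b by apply/setP => x; rewrite !inE negb_or andbC.
  by move: cardC; rewrite (cardsD1 b) !inE bS add1n => -[].
- by rewrite !inE rS orbT.
- move=> e; rewrite !inE => /orP[/eqP -> /=| /BS /andP[-> ->]]; last by rewrite !orbT.
  by rewrite aS eqxx !orbT.
- have abB : (a, b) \notin B by apply: contra bS => /BS/andP[].
  by rewrite !cardsU1 bS abB ltn_add2l.
move=> x; rewrite !inE => /orP[/eqP ->|xS]; last exact: connect_srel_sub BB' (reachS x xS).
apply: connect_trans (connect_srel_sub BB' (reachS a aS)) _.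
by apply: connect1; rewrite srelT !inE eqxx.
Qed.

Lemma arborescence_sub F r : reach F r -> exists B, [/\ B \subset F, reach B r & #|B| < #|T|].
Proof.
move=> rF; have [B [BF ltB rB]] : exists B, [/\ B \subset F, #|B| < #|T| & reach B r].
  apply: (grow_arborescence (P := fun B _ => B \subset F)) => [|B S BF rS _ SnT].
    exact: sub0set.
  have /set0Pn[x xS] := setC_neq0 SnT.
  have rS' : r \notin ~: S by rewrite inE rS.
  have [a [b [abF]]] := reach_enter rF rS' xS.
  by rewrite !inE negbK => aS bS; exists a, b; rewrite subUset sub1set abF BF.
by exists B.
Qed.

End Arborescence.

Section Edmonds.
Variable T : finType.
Notation edge := (T * T)%type.
Implicit Types (S X Y : {set T}) (A B F : {set edge}).

Definition enters (e : edge) Y := (e.1 \notin Y) && (e.2 \in Y).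

Definition two_entering F Y :=
  exists e1 e2, [/\ e1 \in F, e2 \in F, e1 != e2, enters e1 Y & enters e2 Y].

(** The tight sets of Lovász's proof of Edmonds' branching theorem: when [F]
    reaches from [r], a tight set is entered by exactly one arc of [F]. *)
Definition tight F r Y :=
  [&& r \notin Y, Y != set0 &
      [forall e in F, forall f in F, enters e Y ==> enters f Y ==> (e == f)]].

Lemma tightP F r Y e f : tight F r Y -> e \in F -> f \in F ->
  enters e Y -> enters f Y -> e = f.
Proof.
move=> /and3P[_ _ /forall_inP/(_ e) tY] eF fF eY fY; apply/eqP.
by move: (tY eF) => /forall_inP/(_ f fF); rewrite eY fY.
Qed.

Lemma reach_enters F r X x : reach F r -> r \notin X -> x \in X ->
  exists2 e, e \in F & enters e X.
Proof.
move=> rF rX xX; have [a [b [abF aX bX]]] := reach_enter rF rX xX.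
by exists (a, b); rewrite /enters ?aX.
Qed.

Lemma reach_of_enters F r :
  (forall X, r \notin X -> X != set0 -> exists2 e, e \in F & enters e X) -> reach F r.
Proof.
move=> entered x; apply/negPn/negP => nx.
have [||[a b] abF] := entered [set y | ~~ connect (srel setT F) r y].
- by rewrite inE connect0.
- by apply/set0Pn; exists x; rewrite inE.
rewrite /enters !inE negbK /= => /andP[ra /negP[]].
by apply: connect_trans ra (connect1 _); rewrite srelT.
Qed.

Lemma tight_setI F r Y Y' : reach F r -> tight F r Y -> tight F r Y' ->
  Y :&: Y' != set0 -> tight F r (Y :&: Y').
Proof.
move=> rF tY tY' /set0Pn[x xYY'].
have [rY _ _] := and3P tY; have [rY' _ _] := and3P tY'.
have [f fF] : exists2 f, f \in F & enters f (Y :|: Y').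
  by apply: (reach_enters (x := x) rF); rewrite !inE ?negb_or ?rY ?rY' //; case/setIP: xYY' => ->.
rewrite /enters !inE negb_or => /andP[/andP[f1Y f1Y'] f2YY'].
have enters_YY' k : enters k (Y :&: Y') -> enters k Y || enters k Y'.
  by rewrite /enters !inE negb_and => /andP[/orP[]-> /andP[-> ->]]; rewrite ?orbT.
have mixed g h : g \in F -> h \in F -> enters g Y -> enters h Y' ->
    g.2 \in Y' -> h.2 \in Y -> g = h.
  move=> gF hF gY hY' g2Y' h2Y; case/orP: f2YY' => [f2Y|f2Y'].
  - have fg : f = g by apply: tightP tY fF gF _ gY; rewrite /enters f1Y.
    by apply: tightP tY' gF hF _ hY'; rewrite /enters g2Y' -fg f1Y'.
  - have fh : f = h by apply: tightP tY' fF hF _ hY'; rewrite /enters f1Y'.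
    by apply: tightP tY gF hF gY _; rewrite /enters h2Y -fh f1Y.
apply/and3P; split; first by rewrite inE negb_and rY.
  by apply/set0Pn; exists x.
apply/forall_inP => g gF; apply/forall_inP => h hF; apply/implyP => gE; apply/implyP => hE.
have [/setIP[g2Y g2Y'] /setIP[h2Y h2Y']] := (proj2 (andP gE), proj2 (andP hE)).
apply/eqP; case/orP: (enters_YY' g gE) => gY; case/orP: (enters_YY' h hE) => hY.
- exact: tightP tY gF hF gY hY.
- exact: mixed.
- exact/esym/mixed.
- exact: tightP tY' gF hF gY hY.
Qed.

Lemma reach_setD_arc A B r a b : reach (A :\: B) r ->
  (forall Y, tight (A :\: B) r Y -> a \notin Y -> b \in Y -> False) ->
  reach (A :\: ((a, b) |: B)) r.
Proof.
move=> rAB no_tight x; apply/negPn/negP => nx.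
set Y := [set y | ~~ connect (srel setT (A :\: ((a, b) |: B))) r y].
have rY : r \notin Y by rewrite inE connect0.
have only_ab f : f \in A :\: B -> enters f Y -> f = (a, b).
  case: f => f1 f2; rewrite /enters !inE negbK /= => /andP[f2B f12A] /andP[rf1 /negP rf2].
  apply/eqP/negPn/negP => fab; apply: rf2; apply: connect_trans rf1 (connect1 _).
  by rewrite srelT !inE negb_or fab f2B f12A.
have xY : x \in Y by rewrite inE.
have [f fAB fY] := reach_enters rAB rY xY.
have fab := only_ab f fAB fY.
have [aY bY] : a \notin Y /\ b \in Y by move: fY; rewrite fab => /andP[].
apply: (no_tight Y _ aY bY).
apply/and3P; split => //; first by apply/set0Pn; exists x.
apply/forall_inP => g gAB; apply/forall_inP => h hAB; apply/implyP => gY; apply/implyP => hY.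
by rewrite (only_ab g gAB gY) (only_ab h hAB hY).
Qed.

(** Uncrossing: [Y :&: Y'] is tight, meets [~: S] at [b] and is no larger than
    [Y], hence equals [Y]. *)
Lemma min_tight_safe A B r S Y a b : reach (A :\: B) r -> tight (A :\: B) r Y ->
  (forall Y', tight (A :\: B) r Y' -> Y' :\: S != set0 -> #|Y| <= #|Y'|) ->
  a \in Y -> b \in Y :\: S -> forall Y', tight (A :\: B) r Y' -> a \notin Y' -> b \in Y' -> False.
Proof.
move=> rAB tY minY aY bYS Y' tY' aY' bY'; have [bY bS] := setDP bYS.
have YY'0 : Y :&: Y' != set0 by apply/set0Pn; exists b; rewrite inE bY bY'.
have tYY' := tight_setI rAB tY tY' YY'0.
have leY : #|Y| <= #|Y :&: Y'|.
  by apply: minY tYY' _; apply/set0Pn; exists b; rewrite !inE bS bY bY'.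
have /eqP/setP/(_ a) : Y :&: Y' == Y by rewrite eqEcard subsetIl.
by rewrite !inE aY (negbTE aY').
Qed.

Section SafeArc.
Variables (A : {set edge}) (r : T).
Hypothesis entering2 : forall X, r \notin X -> X != set0 -> two_entering A X.

Lemma exists_safe_arc B S : reach (A :\: B) r -> r \in S -> {in B, forall e, e.2 \in S} ->
  S != setT -> exists a b, [/\ (a, b) \in A, a \in S, b \notin S &
    forall Y, tight (A :\: B) r Y -> a \notin Y -> b \in Y -> False].
Proof.
move=> rAB rS BS SnT.
have [/existsP[Y0 tY0]|no_tight] :=
  boolP [exists Y, tight (A :\: B) r Y && (Y :\: S != set0)]; last first.
  have rS' : r \notin ~: S by rewrite inE rS.
  have [[a b] [e2 [abA _ _ abS _]]] := entering2 rS' (setC_neq0 SnT).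
  move: abS; rewrite /enters !inE negbK /= => /andP[aS bS].
  exists a, b; split => // Y tY _ bY; apply: (negP no_tight); apply/existsP; exists Y.
  by rewrite tY; apply/set0Pn; exists b; rewrite inE bY bS.
have [Y /andP[tY YS] minY] :=
  arg_minnP (P := fun Y => tight (A :\: B) r Y && (Y :\: S != set0)) (fun Y => #|Y|) tY0.
have safe e : e \in A -> e.1 \in Y -> enters e (Y :\: S) -> exists a b, [/\ (a, b) \in A,
    a \in S, b \notin S & forall Y, tight (A :\: B) r Y -> a \notin Y -> b \in Y -> False].
  case: e => a b /= abA aY /andP[aYS bYS].
  have aS : a \in S by move: aYS; rewrite inE aY andbT negbK.
  have bS : b \notin S by case/setDP: bYS.
  exists a, b; split => //; apply: (min_tight_safe rAB tY _ aY bYS).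
  by move=> Y' tY' Y'S; apply: minY; rewrite tY'.
have rYS : r \notin Y :\: S by rewrite inE; case/and3P: tY => /negbTE ->; rewrite andbF.
have [e1 [e2 [e1A e2A ne e1E e2E]]] := entering2 rYS YS.
have [e1Y|e1Y] := boolP (e1.1 \in Y); first exact: safe e1A e1Y e1E.
have [e2Y|e2Y] := boolP (e2.1 \in Y); first exact: safe e2A e2Y e2E.
have notB e : enters e (Y :\: S) -> e \in A -> e \in A :\: B.
  move=> /andP[_]; rewrite !inE => /andP[eS _] eA; rewrite eA andbT.
  by apply: contra eS => /BS.
have enY e : e.1 \notin Y -> enters e (Y :\: S) -> enters e Y.
  by move=> eY /andP[_]; rewrite /enters eY inE => /andP[_ ->].
have e12 := tightP tY (notB _ e1E e1A) (notB _ e2E e2A) (enY _ e1Y e1E) (enY _ e2Y e2E).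
by rewrite e12 eqxx in ne.
Qed.

Lemma arborescence_keeping_reach :
  exists B, [/\ B \subset A, reach (A :\: B) r, #|B| < #|T| & reach B r].
Proof.
have [B [[BA rAB] ltB rB]] :
    exists B, [/\ B \subset A /\ reach (A :\: B) r, #|B| < #|T| & reach B r].
  apply: (grow_arborescence (P := fun B _ => B \subset A /\ reach (A :\: B) r))
    => [|B S [BA rAB] rS BS SnT].
    split; first exact: sub0set.
    rewrite setD0; apply: reach_of_enters => X rX X0.
    by have [e1 [e2 [e1A _ _ e1X _]]] := entering2 rX X0; exists e1.
  have [a [b [abA aS bS safe]]] := exists_safe_arc rAB rS BS SnT.
  exists a, b; split => //; split; last exact: reach_setD_arc.
  by rewrite subUset sub1set abA.
by exists B.
Qed.

Lemma two_disjoint_arborescences : exists B1 B2,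
  [/\ B1 :|: B2 \subset A, [disjoint B1 & B2], #|B1| < #|T| & #|B2| < #|T|] /\
  reach B1 r /\ reach B2 r.
Proof.
have [B1 [B1A rAB1 ltB1 rB1]] := arborescence_keeping_reach.
have [B2 [B2AB1 rB2 ltB2]] := arborescence_sub rAB1.
exists B1, B2; split; split => //.
- by rewrite subUset B1A (subset_trans B2AB1) ?subsetDl.
- by rewrite disjoint_sym disjoints_subset (subset_trans B2AB1) // setDE subsetIr.
Qed.

End SafeArc.

End Edmonds.

Section Minimal2EC.
Variable T : finType.
Notation edge := (T * T)%type.
Implicit Types (X : {set T}) (B F U W : {set edge}).

Definition rev_edges F : {set edge} := [set (e.2, e.1) | e in F].

Lemma mem_rev_edges F x y : ((x, y) \in rev_edges F) = ((y, x) \in F).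
Proof. by apply/imsetP/idP => [[[a b] ab [-> ->]] //|yx]; exists (y, x). Qed.

Lemma rev_edgesK : involutive rev_edges.
Proof. by move=> F; apply/setP => -[x y]; rewrite !mem_rev_edges. Qed.

Lemma rev_edgesU F F' : rev_edges (F :|: F') = rev_edges F :|: rev_edges F'.
Proof. exact: imsetU. Qed.

Lemma card_rev_edges F : #|rev_edges F| = #|F|.
Proof. by apply: card_imset => -[a b] [c d] [-> ->]. Qed.

Lemma connect_rev_edges F F' x y : F' \subset rev_edges F ->
  connect (srel setT F') x y -> connect (srel setT F) y x.
Proof.
move=> F'F xy; rewrite -[connect _ y x]connect_rev /=.
apply: connect_sub xy => a b; rewrite srelT => /(subsetP F'F).
by rewrite mem_rev_edges => ba; apply: connect1; rewrite /= srelT.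
Qed.

Lemma two_entering_2ec U X x : two_edge_connected U -> x \notin X -> X != set0 ->
  two_entering U X.
Proof.
move=> /andP[sU /forall_inP sUD] xX /set0Pn[y yX].
have [a [b [abU aX bX]]] := connect_enter (sconnP sU (in_setT x) (in_setT y)) xX yX.
rewrite srelT in abU.
have [c [d [cdU cX dX]]] := connect_enter (sconnP (sUD _ abU) (in_setT x) (in_setT y)) xX yX.
move: cdU; rewrite srelT !inE => /andP[cd_ab cdU].
by exists (a, b), (c, d); rewrite /enters /= aX bX cX dX abU cdU eq_sym cd_ab.
Qed.

Lemma two_entering_rev_2ec U X x : two_edge_connected U -> x \notin X -> X != set0 ->
  two_entering (rev_edges U) X.
Proof.
move=> tU xX /set0Pn[y yX].
have yCX : y \notin ~: X by rewrite inE negbK.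
have CX0 : ~: X != set0 by apply/set0Pn; exists x; rewrite inE.
have [[a b] [[c d] [abU cdU abcd abX cdX]]] := two_entering_2ec tU yCX CX0.
exists (b, a), (d, c); rewrite !mem_rev_edges abU cdU.
move: abX cdX; rewrite /enters /= !inE !negbK => /andP[-> ->] /andP[-> ->].
by split => //; apply: contra abcd => /eqP[-> ->].
Qed.

Lemma reach_setD1_disjoint W B1 B2 r : B1 :|: B2 \subset W -> [disjoint B1 & B2] ->
  reach B1 r -> reach B2 r -> forall e, reach (W :\ e) r.
Proof.
rewrite subUset => /andP[B1W B2W] dB rB1 rB2 e x.
have sub_We B : B \subset W -> e \notin B -> B \subset W :\ e.
  by move=> BW eB; apply/subsetP => f fB; rewrite !inE (subsetP BW f fB) andbT;
     apply: contraNneq eB => <-.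
have [eB1|eB1] := boolP (e \in B1); last exact: connect_srel_sub (sub_We _ B1W eB1) (rB1 x).
have eB2 : e \notin B2 by rewrite (disjointFr dB eB1).
exact: connect_srel_sub (sub_We _ B2W eB2) (rB2 x).
Qed.

Lemma two_edge_connected_of_reach W r :
  (forall e, reach (W :\ e) r) -> (forall e, reach (rev_edges W :\ e) r) ->
  two_edge_connected W.
Proof.
move=> out in_.
have sconnD e : sconn setT (W :\ e).
  apply: sconnT_root (out e) _ => x; apply: connect_rev_edges (in_ (e.2, e.1) x).
  apply/subsetP => -[a b]; rewrite !inE !mem_rev_edges !inE => /andP[ab ->].
  by rewrite andbT; apply: contra ab => /eqP <-.
apply/andP; split; last by apply/forall_inP => e _.
by apply: sconn_sub (sconnD (r, r)); apply: subsetDl.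
Qed.

Lemma two_edge_connected_sub W F : W \subset F -> two_edge_connected W -> two_edge_connected F.
Proof.
move=> WF /andP[sW /forall_inP sWD]; rewrite /two_edge_connected (sconn_sub WF) //=.
apply/forall_inP => f fF; have [fW|fW] := boolP (f \in W).
  by apply: sconn_sub (sWD f fW); apply: setSD.
by apply: sconn_sub sW; rewrite subsetD1 WF.
Qed.

Lemma min_2ec_spanning_sub E U W : min_2ec_spanning E U -> W \subset U ->
  two_edge_connected W -> U \subset W.
Proof.
case=> _ _ minU WU tW; apply/subsetP => e eU; apply/negPn/negP => eW.
by move/negP: (minU e eU); apply; apply: two_edge_connected_sub tW; rewrite subsetD1 WU.
Qed.

Lemma card_min_2ec_spanning E U : min_2ec_spanning E U -> #|U| <= 4 * (#|T| - 1).
Proof.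
move=> minU; have [_ tU _] := minU.
have [r _|T0] := pickP (@predT T); last first.
  by apply: leq_trans (max_card (mem U)) _; rewrite card_prod (eq_card0 T0).
have [B1 [B2 [[B12U dB12 ltB1 ltB2] [rB1 rB2]]]] :=
  two_disjoint_arborescences (r := r) (fun X => two_entering_2ec tU (X := X)).
have [B3 [B4 [[B34U dB34 ltB3 ltB4] [rB3 rB4]]]] :=
  two_disjoint_arborescences (r := r) (fun X => two_entering_rev_2ec tU (X := X)).
set W := B1 :|: B2 :|: rev_edges (B3 :|: B4).
have WU : W \subset U by rewrite subUset B12U -[U]rev_edgesK imsetS.
have tW : two_edge_connected W.
  apply: (two_edge_connected_of_reach (r := r)).
    by apply: reach_setD1_disjoint rB1 rB2; rewrite ?subsetUl.
  by apply: reach_setD1_disjoint rB3 rB4; rewrite // rev_edgesU rev_edgesK subsetUr.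
apply: leq_trans (subset_leq_card (min_2ec_spanning_sub minU WU tW)) _.
have cardU F F' : #|F :|: F'| <= #|F| + #|F'| by apply: leq_card_setU.
apply: leq_trans (cardU _ _) _; rewrite card_rev_edges.
have := cardU B1 B2; have := cardU B3 B4; lia.
Qed.

End Minimal2EC.

Section ComponentReps.
Variable T : finType.
Notation edge := (T * T)%type.
Implicit Types (G : {set edge}) (u v w x y z : T).
Variables (B : {set edge}) (r : T).

Definition conn_avoid G v x y := connect (urel (setT :\ v) G) x y.

Definition anchors v : {set T} :=
  [set z | ((v, z) \in B) && (z != v) || (v != r) && (z == r)].

(** For every vertex [v], [reps G] keeps one arc [(v, z)] per component of the
    underlying graph of [G - v] that contains an anchor of [v], [z] being the
    first such anchor in enumeration order. *)
Definition reps G : {set edge} :=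
  [set p | (p.2 \in anchors p.1) &&
     [forall y in anchors p.1, (enum_rank y < enum_rank p.2)%N ==> ~~ conn_avoid G p.1 y p.2]].

Lemma mem_reps G v z : ((v, z) \in reps G) =
  (z \in anchors v) &&
  [forall y in anchors v, (enum_rank y < enum_rank z)%N ==> ~~ conn_avoid G v y z].
Proof. by rewrite [in LHS]inE. Qed.

Lemma conn_avoid_sym G v x y : conn_avoid G v x y = conn_avoid G v y x.
Proof. exact: urel_connect_sym. Qed.

Lemma conn_avoid_from G v u : conn_avoid G v v u -> u = v.
Proof. by move=> /connectP[[|z p] /=]; [move=> _ -> | rewrite /urel !inE eqxx]. Qed.

Lemma conn_avoid_sub G G' v x y : G \subset G' -> conn_avoid G v x y -> conn_avoid G' v x y.
Proof. exact: connect_urel_sub. Qed.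

Lemma reps_sub G G' : G \subset G' -> reps G' \subset reps G.
Proof.
move=> GG'; apply/subsetP => -[v z]; rewrite !mem_reps => /andP[-> /forall_inP min_z] /=.
apply/forall_inP => y yA; apply/implyP => lt_yz; apply: contra (implyP (min_z y yA) lt_yz).
exact: conn_avoid_sub.
Qed.

Lemma reps_cover G v c : c \in anchors v -> exists2 c', (v, c') \in reps G & conn_avoid G v c' c.
Proof.
move=> cA; have [|m /andP[mA mc] min_m] :=
  arg_minnP (P := fun y => (y \in anchors v) && conn_avoid G v y c) (@enum_rank T) (i0 := c).
  by rewrite cA; apply: connect0.
exists m => //; rewrite mem_reps mA /=; apply/forall_inP => y yA; apply/implyP => lt_ym.
apply/negP => ym; have := min_m y; rewrite yA leqNgt lt_ym.
by move/(_ (connect_trans ym mc)).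
Qed.

Lemma reps_conn_eq G v x y : (v, x) \in reps G -> (v, y) \in reps G ->
  conn_avoid G v x y -> x = y.
Proof.
have min_rep x' y' : (v, x') \in reps G -> (v, y') \in reps G -> conn_avoid G v x' y' ->
    (enum_rank x' <= enum_rank y')%N.
  rewrite !mem_reps => /andP[_ /forall_inP min_x'] /andP[y'A _] cxy; rewrite leqNgt.
  by apply/negP => /(implyP (min_x' y' y'A)); rewrite conn_avoid_sym cxy.
move=> xR yR cxy; apply: enum_rank_inj; apply: val_inj; apply/eqP.
by rewrite eqn_leq min_rep // min_rep // conn_avoid_sym.
Qed.

Lemma card_reps_le G : #|reps G| <= #|B| + (#|T| - 1).
Proof.
have sub : reps G \subset B :|: [set (v, r) | v in [set~ r]].
  apply/subsetP => -[v z]; rewrite mem_reps inE => /andP[/orP[/andP[vzB _]|/andP[vr /eqP ->]] _].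
    by rewrite inE vzB.
  by rewrite inE; apply/orP; right; apply/imsetP; exists v; rewrite // !inE.
apply: leq_trans (subset_leq_card sub) _; apply: leq_trans (leq_card_setU _ _) _.
by rewrite leq_add2l (leq_trans (leq_imset_card _ _)) // cardsC1 subn1.
Qed.

Hypothesis rB : reach B r.

Lemma anchor_cover G v u : B \subset G -> u != v -> exists2 a, a \in anchors v & conn_avoid G v a u.
Proof.
move=> BG uv.
have along p x : path (srel setT B) x p -> u = last x p ->
    conn_avoid G v x u \/ exists2 z, ((v, z) \in B) && (z != v) & conn_avoid G v z u.
  elim: p x => [|z p IHp] x /=; first by move=> _ ->; left; apply: connect0.
  move=> /andP[xz pz] ul; case: (IHp z pz ul) => [czu|]; last by right.
  have zv : z != v by apply: (contra_neq _ uv) => zv; move: czu; rewrite zv => /conn_avoid_from.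
  have [xv|xv] := eqVneq x v; first by right; exists z; rewrite // zv andbT -srelT -xv.
  left; apply: connect_trans czu; apply: connect1.
  by rewrite srelT in xz; rewrite /urel !inE xv zv (subsetP BG _ xz).
have /connectP[p pp ul] := rB u; case: (along p r pp ul) => [cru|[z zB czu]].
  exists r => //; rewrite inE eqxx andbT; apply/orP; right.
  by apply: (contra_neq _ uv) => rv; move: cru; rewrite rv => /conn_avoid_from.
by exists z; rewrite // inE zB.
Qed.

Lemma card_reps_ge G : B \subset G -> 1 < #|T| -> #|T| <= #|reps G|.
Proof.
move=> BG n2; rewrite -cardsT -[setT](_ : [set p.1 | p in reps G] = _) ?leq_imset_card //.
apply/setP => v; rewrite inE; apply/imsetP.
have [u uv] := exists_neq v n2.
have [a aA _] := anchor_cover BG uv; have [z zR _] := reps_cover G aA.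
by exists (v, z).
Qed.

Lemma card_reps_lt G G' v u w : B \subset G -> G \subset G' ->
  u != v -> w != v -> (u, w) \in G' -> ~~ conn_avoid G v u w -> #|reps G'| < #|reps G|.
Proof.
move=> BG GG' uv wv uwG' ncuw.
have [a aA cau] := anchor_cover BG uv; have [a' a'R ca'a] := reps_cover G aA.
have [b bA cbw] := anchor_cover BG wv; have [b' b'R cb'b] := reps_cover G bA.
have cu'w' : conn_avoid G v a' b' -> conn_avoid G v u w.
  move=> cab; rewrite conn_avoid_sym in cau; rewrite conn_avoid_sym in ca'a.
  exact: connect_trans cau (connect_trans ca'a (connect_trans cab (connect_trans cb'b cbw))).
have c'ab : conn_avoid G' v a' b'.
  have ca'u : conn_avoid G' v a' u := conn_avoid_sub GG' (connect_trans ca'a cau).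
  have cuw : conn_avoid G' v u w by apply: connect1; rewrite /urel !inE uv wv uwG'.
  have cwb' : conn_avoid G' v w b'.
    by rewrite conn_avoid_sym; apply: conn_avoid_sub GG' (connect_trans cb'b cbw).
  exact: connect_trans ca'u (connect_trans cuw cwb').
apply: proper_card; rewrite properEneq reps_sub // andbT; apply/eqP => eqR.
have a'b' : a' = b' by apply: (reps_conn_eq _ _ c'ab); rewrite eqR.
by move/negP: ncuw; apply; apply: cu'w'; rewrite a'b'; apply: connect0.
Qed.

End ComponentReps.

Section Blocks.
Variable T : finType.
Notation edge := (T * T)%type.
Implicit Types (S : {set T}) (F G : {set edge}).

Lemma connect_retract (e e' : rel T) (pi : T -> T) x y :
  (forall a b, e a b -> pi a = pi b \/ e' (pi a) (pi b)) ->
  connect e x y -> connect e' (pi x) (pi y).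
Proof.
move=> pi_e /connectP[p]; elim: p x => [|z p IHp] x /= => [_ ->|/andP[xz pz] yl].
  exact: connect0.
apply: connect_trans (IHp z pz yl); case: (pi_e x z xz) => [->|]; first exact: connect0.
exact: connect1.
Qed.

Section Attached.
Variables (S0 S1 : {set T}) (d : T) (F : {set edge}).
Hypothesis attached : forall a b, a \in S0 -> b \in S0 -> a \in S1 -> b \notin S1 ->
  ((a, b) \in F) || ((b, a) \in F) -> a = d.

(** Retracting [S0 :\: S1] onto [d] turns walks in [S0] into walks in [S1]. *)
Lemma connect_attached (adj : rel T) x y :
  (forall a b, adj a b -> ((a, b) \in F) || ((b, a) \in F)) -> x \in S1 -> y \in S1 ->
  connect (fun a b => [&& a \in S0, b \in S0 & adj a b]) x y ->
  connect (fun a b => [&& a \in S1, b \in S1 & adj a b]) x y.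
Proof.
move=> adjF xS1 yS1 /(connect_retract (pi := fun z => if z \in S1 then z else d)).
rewrite xS1 yS1; apply=> a b /and3P[aS0 bS0 ab].
case aS1: (a \in S1); case bS1: (b \in S1); rewrite ?aS1 ?bS1 ?ab; auto.
- by left; apply: attached aS0 bS0 aS1 _ (adjF a b ab); rewrite bS1.
- by left; apply/esym/(attached bS0 aS0 bS1); rewrite ?aS1 // orbC adjF.
Qed.

Lemma connect_urel_attached x y : x \in S1 -> y \in S1 ->
  connect (urel S0 F) x y -> connect (urel S1 F) x y.
Proof. exact: connect_attached. Qed.

Lemma connect_srel_attached x y : x \in S1 -> y \in S1 ->
  connect (srel S0 F) x y -> connect (srel S1 F) x y.
Proof. by apply: connect_attached => a b ->. Qed.

End Attached.

Definition unseparated G S u w :=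
  forall v, v \in S -> v != u -> v != w -> connect (urel (S :\ v) G) u w.

Section CutComponent.
Variables (G : {set edge}) (S0 : {set T}) (c a : T).

Definition cut_comp : {set T} := [set z in S0 :\ c | connect (urel (S0 :\ c) G) a z].

Lemma cut_comp_sub : cut_comp \subset S0 :\ c.
Proof. by apply/subsetP => z /setIdP[]. Qed.

Lemma cut_comp_closed p q : p \in cut_comp -> q \in S0 :\ c ->
  ((p, q) \in G) || ((q, p) \in G) -> q \in cut_comp.
Proof.
move=> /setIdP[pSc ap] qSc pq; apply/setIdP; split=> //.
by apply: connect_trans ap (connect1 _); rewrite /urel pSc qSc.
Qed.

Lemma cut_comp_attached p q : p \in S0 -> q \in S0 -> p \in c |: cut_comp ->
  q \notin c |: cut_comp -> ((p, q) \in G) || ((q, p) \in G) -> p = c.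
Proof.
move=> _ qS0 /setU1P[//|pC]; rewrite in_setU1 negb_or => /andP[qc qC] /(cut_comp_closed pC).
by rewrite (negbTE qC) !inE qc qS0 => /(_ isT).
Qed.

Hypothesis cS0 : c \in S0.

Lemma cut_comp_setU1_sub : c |: cut_comp \subset S0.
Proof. by rewrite subUset sub1set cS0 (subset_trans cut_comp_sub) ?subsetDl. Qed.

Lemma sconn_cut_comp : sconn S0 G -> sconn (c |: cut_comp) G.
Proof.
move=> sS0; apply/forall_inP => p pS1; apply/forall_inP => q qS1.
apply: (connect_srel_attached cut_comp_attached pS1 qS1).
by apply: sconnP sS0 _ _; apply: (subsetP cut_comp_setU1_sub).
Qed.

Lemma unseparated_cut_comp u w : u \in c |: cut_comp -> w \in c |: cut_comp ->
  unseparated G S0 u w -> unseparated G (c |: cut_comp) u w.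
Proof.
move=> uS1 wS1 unsep v vS1 vu vw.
have uwv := unsep v (subsetP cut_comp_setU1_sub v vS1) vu vw.
have [vc|vc] := eqVneq v c.
  subst v; have cC : c \notin cut_comp by apply/negP => /(subsetP cut_comp_sub); rewrite !inE eqxx.
  rewrite setU1K //; apply: (connect_urel_attached (d := u)) uwv; last 2 first.
  - by move: uS1; rewrite in_setU1 eq_sym (negbTE vu).
  - by move: wS1; rewrite in_setU1 eq_sym (negbTE vw).
  by move=> p q _ qSc pC /negP qC /(cut_comp_closed pC qSc).
apply: (connect_urel_attached (d := c)) uwv; last 2 first.
- by rewrite in_setD1 uS1 andbT eq_sym.
- by rewrite in_setD1 wS1 andbT eq_sym.
move=> p q /setD1P[_ pS0] /setD1P[qv qS0] /setD1P[_ pS1] qS1v.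
by apply: cut_comp_attached => //; apply: contra qS1v => qS1; rewrite in_setD1 qv.
Qed.

End CutComponent.

(** Cutting at an articulation point [c] of [S0], keep [c] together with the
    component of [S0 - c] containing whichever of [u], [w] is not [c]. *)
Lemma shrink_at_cut_vertex G S0 u w : u != w -> u \in S0 -> w \in S0 -> sconn S0 G ->
  unseparated G S0 u w -> ~~ biconn S0 G ->
  exists S1, [/\ S1 \proper S0, u \in S1, w \in S1, sconn S1 G & unseparated G S1 u w].
Proof.
move=> uw uS0 wS0 sS0 unsep; rewrite /biconn uconn_sconn //= negb_forall_in.
case/exists_inP=> c cS0; rewrite negb_forall_in => /exists_inP[x xSc].
rewrite negb_forall_in => /exists_inP[y ySc nxy].
set a := if c == u then w else u; set C := cut_comp G S0 c a.
have in_S1 z : z \in S0 -> (z != c -> connect (urel (S0 :\ c) G) a z) -> z \in c |: C.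
  move=> zS0 az; rewrite in_setU1; case: eqVneq => //= zc.
  by apply/setIdP; rewrite !inE zc zS0 az.
have uS1 : u \in c |: C by apply: in_S1 => // uc; rewrite /a eq_sym (negbTE uc) connect0.
have wS1 : w \in c |: C.
  apply: in_S1 => // wc; rewrite /a; case: eqVneq => [_|cu]; first exact: connect0.
  by apply: unsep; rewrite // eq_sym.
exists (c |: C); split=> //; [|exact: sconn_cut_comp|exact: unseparated_cut_comp].
rewrite properEneq cut_comp_setU1_sub // andbT; apply: contra nxy => /eqP S1S0.
have aC z : z \in S0 :\ c -> connect (urel (S0 :\ c) G) a z.
  move=> zSc; have /setU1P[zc|/setIdP[] //] : z \in c |: C by rewrite S1S0; case/setD1P: zSc.
  by move: zSc; rewrite zc !inE eqxx.
by apply: connect_trans (aC y ySc); rewrite urel_connect_sym aC.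
Qed.

Lemma sbiconn_of_unseparated G S0 u w : u != w -> u \in S0 -> w \in S0 -> sconn S0 G ->
  unseparated G S0 u w -> exists S, [/\ u \in S, w \in S & sbiconn S G].
Proof.
move=> uw; elim: {S0}_.+1 {-2}S0 (ltnSn #|S0|) => // k IHk S0 ltS0 uS0 wS0 sS0 unsep.
have [bS0|nbS0] := boolP (biconn S0 G); first by exists S0; rewrite /sbiconn sS0 bS0.
have [S1 [S1S0 uS1 wS1 sS1 unsep1]] := shrink_at_cut_vertex uw uS0 wS0 sS0 unsep nbS0.
exact: IHk (leq_trans (proper_card S1S0) _) uS1 wS1 sS1 unsep1.
Qed.

Definition subgraphb F S F' :=
  (F' \subset F) && [forall e in F', (e.1 \in S) && (e.2 \in S)].

Lemma subgraphP F S F' : reflect (subgraph F S F') (subgraphb F S F').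
Proof.
apply: (iffP andP) => [[FF' /forall_inP FS]|[FF' FS]]; split => //.
  by move=> x y /FS /andP.
by apply/forall_inP => -[x y] /FS [/= -> ->].
Qed.

Lemma sbiconn_restrict G S : sbiconn S G -> sbiconn S [set e in G | (e.1 \in S) && (e.2 \in S)].
Proof.
set F' := [set e in G | _].
have srelF' a b : srel S G a b -> srel S F' a b.
  by case/and3P=> aS bS abG; rewrite /srel !inE aS bS abG.
have urelF' S' a b : S' \subset S -> urel S' G a b -> urel S' F' a b.
  move=> S'S /and3P[aS' bS' abG]; have aS := subsetP S'S a aS'; have bS := subsetP S'S b bS'.
  by rewrite /urel !inE aS' bS' aS bS !andbT.
have uconnF' S' : S' \subset S -> uconn S' G -> uconn S' F'.
  move=> S'S /forall_inP uc; apply/forall_inP => x xS'; apply/forall_inP => y yS'.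
  move: (uc x xS') => /forall_inP/(_ y yS').
  by apply: connect_sub => a b /(urelF' _ _ _ S'S)/connect1.
case/and3P=> /forall_inP sc ucS /forall_inP ucD; apply/and3P; split.
- apply/forall_inP => x xS; apply/forall_inP => y yS.
  by move: (sc x xS) => /forall_inP/(_ y yS); apply: connect_sub => a b /srelF'/connect1.
- exact: uconnF'.
- by apply/forall_inP => v vS; apply: uconnF' (ucD v vS); apply: subD1set.
Qed.

Lemma exists_sbc G S F' : subgraph G S F' -> sbiconn S F' ->
  exists S2 F2, [/\ is_sbc G S2 F2, S \subset S2 & F' \subset F2].
Proof.
move=> /subgraphP sg sb.
pose P (p : {set T} * {set edge}) :=
  [&& subgraphb G p.1 p.2, sbiconn p.1 p.2, S \subset p.1 & F' \subset p.2].
have P0 : P (S, F') by rewrite /P sg sb !subxx.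
have [[Sm Fm] /and4P[/subgraphP sgm sbm SSm FFm] maxm] :=
  arg_maxnP (fun p : {set T} * {set edge} => #|p.1| + #|p.2|) P0.
exists Sm, Fm; split => //; split => // S2 F2 sg2 sb2 S2m F2m.
have /maxm/= le : P (S2, F2).
  by rewrite /P /= (subset_trans SSm S2m) (subset_trans FFm F2m) sb2 !andbT; apply/subgraphP.
have c1 := subset_leq_card S2m; have c2 := subset_leq_card F2m.
split; apply/eqP; rewrite eqEcard ?S2m ?F2m //=.
  by rewrite -(leq_add2r #|F2|) (leq_trans le) // leq_add2l.
by rewrite -(leq_add2l #|S2|) (leq_trans le) // leq_add2r.
Qed.

Lemma same_sbc_of_sbiconn G S u w : sbiconn S G -> u \in S -> w \in S -> same_sbc G u w.
Proof.
move=> /sbiconn_restrict sb uS wS.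
have sg : subgraph G S [set e in G | (e.1 \in S) && (e.2 \in S)].
  split=> [|x y /setIdP[_ /andP[]] //]; by apply/subsetP => e /setIdP[].
have [S2 [F2 [sbc SS2 _]]] := exists_sbc sg sb.
by exists S2, F2; rewrite !(subsetP SS2).
Qed.

Lemma sbiconn_set1 G u : sbiconn [set u] G.
Proof.
have conn1 (R : rel T) : [forall x in [set u], forall y in [set u], connect R x y].
  by apply/forall_inP => x /set1P->; apply/forall_inP => y /set1P->; apply: connect0.
rewrite /sbiconn /biconn /sconn /uconn !conn1 /=; apply/forall_inP => v /set1P->.
by rewrite setDv; apply/forall_inP => x; rewrite inE.
Qed.

Lemma separating_vertex G u w : sconn setT G -> ~ same_sbc G u w ->
  u != w /\ exists v, [/\ v != u, v != w & ~~ connect (urel (setT :\ v) G) u w].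
Proof.
move=> sG not_same.
have uw : u != w.
  apply: contra_not_neq not_same => <-.
  by apply: (same_sbc_of_sbiconn (sbiconn_set1 G u)); rewrite inE.
split => //.
have [/existsP[v /and3P[vu vw sep]]|] :=
  boolP [exists v, [&& v != u, v != w & ~~ connect (urel (setT :\ v) G) u w]].
  by exists v.
rewrite negb_exists => /forallP unsep.
have unsepT : unseparated G setT u w.
  by move=> v _ vu vw; move: (unsep v); rewrite vu vw negbK.
have [S [uS wS sb]] := sbiconn_of_unseparated uw (in_setT u) (in_setT w) sG unsepT.
by case: not_same; apply: same_sbc_of_sbiconn sb uS wS.
Qed.

End Blocks.

Section Loops.
Variable T : finType.
Notation edge := (T * T)%type.
Implicit Types (E R U Cur Mid Out : {set edge}).

Lemma aug_loop_grow E R Cur Out : aug_loop E R Cur Out -> Cur \subset Out.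
Proof. by elim=> // C v w O _ _ _ _ _; apply: subset_trans; apply: subsetUr. Qed.

Lemma aug_loop_stop E R Cur Out : biconn setT (Cur :\: R) -> aug_loop E R Cur Out -> Out = Cur.
Proof. by move=> + aug; case: aug => // C v w O /negbTE ->. Qed.

Lemma sconn_setD1_2ec U t : two_edge_connected U -> sconn setT (U :\ t).
Proof.
case/andP=> sU /forall_inP sUD; have [tU|tU] := boolP (t \in U); first exact: sUD.
by apply: sconn_sub sU; rewrite subsetD1 subxx.
Qed.

(** Each arc added while processing the b-bridge [t] merges two components of
    some [Cur - t - x], so it uses up one of the component representatives. *)
Lemma aug_loop_reps E t Cur Mid (B : {set edge}) r : aug_loop E [set t] Cur Mid -> t \in Cur ->
  sconn setT (Cur :\ t) -> B \subset Cur :\ t -> reach B r ->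
  #|Mid| + #|reps B r (Mid :\ t)| <= #|Cur| + #|reps B r (Cur :\ t)|.
Proof.
move=> aug; elim: aug => // C v w O _ vwE vwC not_same _ IH tC sC BC rB.
have CC' : C :\ t \subset ((v, w) |: C) :\ t by apply: setSD; apply: subsetUr.
have le_O := IH (setU1r _ tC) (sconn_sub CC' sC) (subset_trans BC CC') rB.
have [_ [x [xv xw sep]]] := separating_vertex sC not_same.
have vwC' : (v, w) \in ((v, w) |: C) :\ t.
  by rewrite !inE eqxx andbT; apply: contraNneq vwC => ->.
rewrite eq_sym in xv; rewrite eq_sym in xw.
have lt_reps := card_reps_lt rB BC CC' xv xw vwC' sep.
apply: leq_trans le_O _; rewrite cardsU1 vwC add1n addSn -addnS leq_add2l; exact: lt_reps.
Qed.

Lemma card_aug_loop_bridge E t Cur Mid : aug_loop E [set t] Cur Mid -> t \in Cur ->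
  sconn setT (Cur :\ t) -> 1 < #|T| -> #|Mid| <= #|Cur| + (#|T| - 2).
Proof.
move=> aug tC sC n2; have [B [BC rB ltB]] := arborescence_sub (sconnT_reach t.1 sC).
have le := aug_loop_reps aug tC sC BC rB.
have ge := card_reps_ge rB (subset_trans BC (setSD _ (aug_loop_grow aug))) n2.
have := card_reps_le B t.1 (Cur :\ t).
lia.
Qed.

Lemma card_bridge_loop E U s Cur Out : bridge_loop E s Cur Out -> {subset s <= Cur} ->
  U \subset Cur -> two_edge_connected U -> 1 < #|T| -> #|Out| <= #|Cur| + size s * (#|T| - 2).
Proof.
elim=> [C|t ts C M O aug _ IH] sC UC tU n2 /=; first by rewrite addn0.
have tC : t \in C by apply: sC; rewrite inE eqxx.
have CM := aug_loop_grow aug.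
have sCt : sconn setT (C :\ t) := sconn_sub (setSD _ UC) (sconn_setD1_2ec t tU).
have tsM : {subset ts <= M} by move=> t' t'ts; apply/(subsetP CM)/sC; rewrite inE t'ts orbT.
have le_M : #|M| <= #|C| + (#|T| - 2) := card_aug_loop_bridge aug tC sCt n2.
have le_O : #|O| <= #|M| + size ts * (#|T| - 2) := IH tsM (subset_trans UC CM) tU n2.
rewrite mulSn addnA; apply: leq_trans le_O _; rewrite leq_add2r; exact: le_M.
Qed.

End Loops.

Unset Implicit Arguments.

Theorem mainTheorem4 (T : finType) (E U Out : {set T * T}) :
  two_edge_sb E ->
  algA_run E U Out ->
  #|Out| <= #|bbridges U| * (#|T| - 1) + 5 * #|T|.
Proof.
move=> /and3P[n3 _ _] [minU run]; have [_ tU _] := minU.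
have n2 : 1 < #|T| by apply: leq_trans n3.
have cardU := card_min_2ec_spanning minU.
case: run => [[_ ->]|[_ [F3 [s [aug3 perm_s loop4]]]]]; first by nia.
have [bU|nbU] := boolP (biconn setT U).
  have F3U : F3 = U by apply: aug_loop_stop aug3; rewrite setD0.
  subst F3; have size_s : size s = #|bbridges U| by rewrite (perm_size perm_s) -cardE.
  have sU : {subset s <= U} by move=> t; rewrite (perm_mem perm_s) mem_enum => /setIdP[].
  have le_Out : #|Out| <= #|U| + size s * (#|T| - 2) := card_bridge_loop loop4 sU (subxx U) tU n2.
  rewrite size_s in le_Out; move: le_Out cardU n3.
  move: #|Out| #|U| #|bbridges U| #|T| => o u i n; nia.
have le_Out : #|Out| <= #|T| * #|T| by rewrite -card_prod -cardsT subset_leq_card ?subsetT.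
have ge_U : #|T| <= #|U| := card_sconn_ge (proj1 (andP tU)) n2.
rewrite bbridges_not_biconn //; move: le_Out ge_U; move: #|Out| #|U| #|T| => o u n; nia.
Qed.
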